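(* Let $k=2\kappa+1$ with $\kappa\in\{0,1,2,\dots\}$, and let $$\psi(x)=\frac{1}{k!}\,\frac{1}{x(1-x)}\,\frac{d^{k-1}}{dx^{k-1}}\Big[x^{k+1}(1-x)^k\Big],\qquad x\in[0,1]$$ (a polynomial of degree $k$). Then (i) $\int_0^1\psi(x)^2\,dx=\frac{1}{k(k+2)}$; (ii) $\int_0^1\psi(x)\psi(1-x)\,dx=\frac{1}{k(k+1)(k+2)}$; (iii) $\int_0^1 x^j\psi(x)\,dx=\frac{1}{k(k+2)}$ for $j=1,2,\dots,k$; (iv) $\int_0^1\psi(x)\,dx=\frac{1}{k(k+1)}$; (v) $\int_0^1(1-x)^j\psi(x)\,dx=\frac{1}{k(k+1)(k+2)}$ for $j=1,2,\dots,k$; (vi) $\psi'(0)=\frac{k+1}{2}$ and $\psi'(1)=\frac{k^2+2k-1}{2}$; (vii) $\int_0^1\psi'(x)\psi(1-x)\,dx=\frac{1}{k+1}$.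
   Context: The expression defining $\psi$ is understood as the polynomial obtained after cancelling the factor $x(1-x)$ (for $k=1$ this gives $\psi(x)=x$). *)

From HB Require Import structures.
From mathcomp Require Import all_boot all_order all_algebra.
From mathcomp Require Import all_classical all_reals all_analysis.
Set Implicit Arguments. Unset Strict Implicit. Unset Printing Implicit Defensive.
Import Order.TTheory GRing.Theory Num.Theory.
Local Open Scope ring_scope.

(* psi_k(x) = 1/k! * 1/(x(1-x)) * d^{k-1}/dx^{k-1} [ x^{k+1} (1-x)^k ],
   as the polynomial obtained after cancelling the factor x(1-x)
   (exact polynomial division by 'X * (1 - 'X)). *)
Definition psi_poly (R : fieldType) (k : nat) : {poly R} :=
  (k`!%:R)^-1 *: ((('X ^+ k.+1 * (1 - 'X) ^+ k)^`(k.-1)) %/ ('X * (1 - 'X))).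

From HB Require Import structures.
From mathcomp Require Import all_boot all_order all_algebra.
From mathcomp Require Import all_classical all_reals all_analysis.
From mathcomp Require Import ring lra zify.
Import Order.TTheory GRing.Theory Num.Theory.
Local Open Scope ring_scope.

(* Write k = n + 1, W = x (1 - x) and F = x^(k+1) (1 - x)^k, so that psi W = F^(n) / k!.
   Since F^(i) vanishes at 0 and 1 for i < n, n integrations by parts give
   int_0^1 q psi W = 0 for deg q < n.  Every r of degree at most k splits as
   r(0) (1 - x) + r(1) x + q W with deg q < n, hence
   int_0^1 r psi = r(0) A + r(1) B,  A = int_0^1 (1 - x) psi,  B = int_0^1 x psi,
   and (i)-(v) and (vii) (after one more integration by parts) are instances of this
   formula; psi(0), psi(1), psi'(0), psi'(1) are read off the Taylor coefficients of
   F at 0 and 1.  Finally (1 - x) psi = F^(n) / (k! x), and n integrations by parts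
   give int_0^1 F^(n) / x = n! int_0^1 F / x^k = n! int_0^1 x (1 - x)^k, so that
   A = (1/k) int_0^1 x (1 - x)^k; as n is even, B is the same computation for
   F(1 - x). *)

Section PolyFacts.
Context {R : realType}.
Implicit Types p q : {poly R}.

Lemma horner_1mX x : (1 - 'X : {poly R}).[x] = 1 - x.
Proof. by rewrite hornerD hornerN hornerX hornerC. Qed.

Lemma deriv_1mX : (1 - 'X : {poly R})^`() = -1.
Proof. by rewrite derivB -polyC1 derivC derivX sub0r. Qed.

Lemma size_1mX : size (1 - 'X : {poly R}) = 2.
Proof. by rewrite -opprB size_polyN -polyC1 size_XsubC. Qed.

Lemma comp_1mX_1mX : (1 - 'X) \Po (1 - 'X) = 'X :> {poly R}.
Proof. by rewrite comp_polyB comp_polyX -polyC1 comp_polyC opprB addrC subrK. Qed.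

Lemma comp_1mXK p : p \Po (1 - 'X) \Po (1 - 'X) = p.
Proof. by rewrite -comp_polyA comp_1mX_1mX comp_polyXr. Qed.

Lemma size_comp_1mX p : size (p \Po (1 - 'X)) = size p.
Proof. exact: size_comp_poly2 size_1mX. Qed.

Lemma derivn_horner0 p i : (p^`(i)).[0] = p`_i * i`!%:R.
Proof. by rewrite horner_coef0 coef_derivn addn0 ffactnn mulr_natr. Qed.

Lemma derivn_comp_1mX p i :
  (p \Po (1 - 'X))^`(i) = (-1) ^+ i *: (p^`(i) \Po (1 - 'X)).
Proof.
elim: i => [|i IHi]; first by rewrite !derivn0 expr0 scale1r.
rewrite !derivnS IHi derivZ deriv_comp deriv_1mX mulrN1 scalerN -scaleN1r.
by rewrite scalerA exprS.
Qed.

Lemma derivn_horner1 p i :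
  (p^`(i)).[1] = (-1) ^+ i * ((p \Po (1 - 'X))`_i * i`!%:R).
Proof.
rewrite -derivn_horner0 derivn_comp_1mX hornerZ horner_comp horner_1mX subr0.
by rewrite mulrA -expr2 sqrr_sign mul1r.
Qed.

Lemma coef1_1mXn m : ((1 - 'X) ^+ m : {poly R})`_1 = - m%:R.
Proof.
have := derivn_horner0 ((1 - 'X) ^+ m) 1; rewrite derivn1 mulr1 => <-.
rewrite deriv_exp deriv_1mX hornerMn mulN1r hornerN horner_exp horner_1mX subr0.
by rewrite expr1n mulNrn.
Qed.

Lemma size_derivn_leq p m : (size p^`(m) <= size p - m)%N.
Proof.
apply/leq_sizeP => j; rewrite leq_subLR addnC => /leq_sizeP szp.
by rewrite coef_derivn szp ?mul0rn // addnC.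
Qed.

Lemma dvdp_deriv_Xn p m : 'X^(m.+1) %| p -> 'X^m %| p^`().
Proof.
move=> /dvdpP [q ->]; apply/dvdpP; exists (q^`() * 'X + q *+ m.+1).
by rewrite derivM derivXn exprS /=; ring.
Qed.

Lemma dvdp_derivn_Xn p a i : 'X^a %| p -> 'X^(a - i) %| p^`(i).
Proof.
move=> dvd_p; elim: i => [|i IHi]; first by rewrite subn0 derivn0.
rewrite derivnS; case: (ltnP i a) => [lt_ia|le_ai].
  by apply: dvdp_deriv_Xn; rewrite subnSK.
by rewrite (eqP (_ : a - i.+1 == 0)%N) ?dvd1p //; lia.
Qed.

Lemma dvdp_mulX1mX p : p.[0] = 0 -> p.[1] = 0 -> 'X * (1 - 'X) %| p.
Proof.
move=> p0 p1; have /factor_theorem [q pE] : root p 0 by rewrite rootE p0.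
have /factor_theorem [r qE] : root q 1.
  by move: p1; rewrite pE hornerM hornerXsubC subr0 mulr1 rootE => ->.
apply/dvdpP; exists (- r); rewrite pE qE subr0 -polyC1; ring.
Qed.

Lemma size_mulX1mX : size ('X * (1 - 'X) : {poly R}) = 3%N.
Proof.
rewrite -opprB mulrN size_polyN -polyC1 size_mul ?polyX_eq0 ?polyXsubC_eq0 //.
by rewrite size_polyX size_XsubC.
Qed.

Lemma mulX1mX_deriv_horner0 p :
  ((p * ('X * (1 - 'X)))^`()).[0] = p.[0] /\
  ((p * ('X * (1 - 'X)))^`()^`()).[0] = 2 * (p^`()).[0] - 2 * p.[0].
Proof.
rewrite !(derivM, derivD, deriv_1mX, derivX, derivN) -polyC1 derivC !hornerE /=.
by split; ring.
Qed.

Lemma mulX1mX_deriv_horner1 p :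
  ((p * ('X * (1 - 'X)))^`()).[1] = - p.[1] /\
  ((p * ('X * (1 - 'X)))^`()^`()).[1] = - 2 * (p^`()).[1] - 2 * p.[1].
Proof.
rewrite !(derivM, derivD, deriv_1mX, derivX, derivN) -polyC1 derivC !hornerE /=.
by split; ring.
Qed.

End PolyFacts.

Section Integral01.
Context {R : realType}.
Implicit Types p q G H P : {poly R}.

(* The constant coefficient is p`_0 / 0 = 0. *)
Definition poly_prim p : {poly R} := \poly_(i < (size p).+1) (p`_i.-1 / i%:R).

Definition int01 p : R := (poly_prim p).[1] - (poly_prim p).[0].

Lemma deriv_poly_prim p : (poly_prim p)^`() = p.
Proof.
apply/polyP => i; rewrite coef_deriv coef_poly ltnS /=.
case: ltnP => [_|?]; first by rewrite -[_ *+ i.+1]mulr_natr mulfVK ?pnatr_eq0.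
by rewrite mul0rn nth_default.
Qed.

Lemma deriv_eq0_polyC p : p^`() = 0 -> p = (p`_0)%:P.
Proof.
move=> p'0; apply/polyP => -[|i]; rewrite coefC //=.
have /eqP := congr1 (fun q => q`_i) p'0.
by rewrite coef_deriv coef0 -mulr_natr mulf_eq0 pnatr_eq0 orbF => /eqP.
Qed.

Lemma int01_FTC p P : P^`() = p -> int01 p = P.[1] - P.[0].
Proof.
move=> P'p; set d := poly_prim p - P.
have /deriv_eq0_polyC d_const : d^`() = 0 by rewrite derivB deriv_poly_prim P'p subrr.
rewrite /int01 (_ : poly_prim p = P + d); last by rewrite addrC subrK.
by rewrite d_const !hornerD !hornerC; ring.
Qed.

Lemma int01_deriv P : int01 P^`() = P.[1] - P.[0].
Proof. exact: int01_FTC. Qed.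

Lemma int01_0 : int01 0 = 0.
Proof. by have := int01_deriv 0; rewrite deriv0 !horner0 subrr. Qed.

Lemma int01D p q : int01 (p + q) = int01 p + int01 q.
Proof.
rewrite (@int01_FTC _ (poly_prim p + poly_prim q)) ?derivD ?deriv_poly_prim //.
by rewrite /int01 !hornerD; ring.
Qed.

Lemma int01Z a p : int01 (a *: p) = a * int01 p.
Proof.
rewrite (@int01_FTC _ (a *: poly_prim p)) ?derivZ ?deriv_poly_prim //.
by rewrite /int01 !hornerZ; ring.
Qed.

Lemma int01N p : int01 (- p) = - int01 p.
Proof. by rewrite -scaleN1r int01Z mulN1r. Qed.

Lemma int01B p q : int01 (p - q) = int01 p - int01 q.
Proof. by rewrite int01D int01N. Qed.

Lemma int01_by_parts p q :
  int01 (p * q^`()) = (p * q).[1] - (p * q).[0] - int01 (p^`() * q).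
Proof. by rewrite -int01_deriv derivM int01D; ring. Qed.

Lemma int01_Xn m : int01 'X^m = (m.+1)%:R^-1.
Proof.
rewrite (@int01_FTC _ ((m.+1)%:R^-1 *: 'X^(m.+1))); last first.
  rewrite derivZ derivXn -scalerMnr scalerMnl -mulr_natr.
  by rewrite mulVf ?scale1r ?pnatr_eq0.
by rewrite !hornerZ !hornerXn expr1n expr0n mulr0 subr0 mulr1.
Qed.

Lemma int01_comp_1mX p : int01 (p \Po (1 - 'X)) = int01 p.
Proof.
rewrite (@int01_FTC _ (- (poly_prim p \Po (1 - 'X)))); last first.
  by rewrite derivN deriv_comp deriv_poly_prim deriv_1mX mulrN1 opprK.
by rewrite /int01 !hornerN !horner_comp !horner_1mX subr0 subrr; ring.
Qed.

Lemma int01_1mXn m : int01 ((1 - 'X) ^+ m) = (m.+1)%:R^-1.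
Proof. by rewrite -comp_Xn_poly int01_comp_1mX int01_Xn. Qed.

Lemma integral01_poly p (f : R -> R) : f =1 horner p ->
  (\int[lebesgue_measure]_(x in `[0%R, 1%R]) (f x)%:E = (int01 p)%:E)%E.
Proof.
move=> /funext ->.
rewrite (@continuous_FTC2 R _ (horner (poly_prim p)) 0 1) ?ltr01 //.
- by apply: continuous_subspace_itv => x _; exact: continuous_horner.
- split.
  + by move=> x _; exact: derivable_horner.
  + by apply: cvg_at_right_filter; exact: continuous_horner.
  + by apply: cvg_at_left_filter; exact: continuous_horner.
- by move=> x _; rewrite -derivE deriv_poly_prim.
Qed.

Lemma int01_mul_derivn_eq0 G m q :
  (forall i, (i < m)%N -> (G^`(i)).[0] = 0 /\ (G^`(i)).[1] = 0) ->
  (size q <= m)%N -> int01 (q * G^`(m)) = 0.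
Proof.
elim: m q => [|m IHm] q G_vanish szq.
  by move: szq; rewrite leqn0 size_poly_eq0 => /eqP->; rewrite mul0r int01_0.
have [G0m G1m] := G_vanish m (ltnSn m).
rewrite derivnS int01_by_parts !hornerM G0m G1m !mulr0 subrr sub0r IHm ?oppr0 //.
- by move=> i ltim; apply: G_vanish; apply: ltnW.
- have [->|q0] := eqVneq q 0; first by rewrite deriv0 size_poly0.
  by rewrite -ltnS (leq_trans (lt_size_deriv q0)).
Qed.

Lemma int01_deriv_divXn G j : 'X^(j.+1) %| G ->
  int01 (G^`() %/ 'X^j) = j%:R * int01 (G %/ 'X^(j.+1)) + G.[1].
Proof.
have Xn0 i : 'X^i != 0 :> {poly R} by rewrite expf_neq0 ?polyX_eq0.
move=> /dvdpP [Q ->]; rewrite mulpK //.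
have -> : (Q * 'X^(j.+1))^`() = (j%:R *: Q + (Q * 'X)^`()) * 'X^j.
  by rewrite !derivM derivXn derivX /= scaler_nat exprS; ring.
rewrite mulpK // int01D int01Z int01_deriv !hornerM !hornerX hornerXn expr1n.
by rewrite mulr0 subr0.
Qed.

Lemma int01_derivn_divX H m : 'X^(m.+1) %| H ->
  (forall i, (i < m)%N -> (H^`(i)).[1] = 0) ->
  int01 (H^`(m) %/ 'X) = m`!%:R * int01 (H %/ 'X^(m.+1)).
Proof.
elim: m H => [|m IHm] H dvd_H H_at1; first by rewrite derivn0 fact0 mul1r expr1.
rewrite derivSn IHm; last 2 first.
- by rewrite (_ : m.+1 = m.+2 - 1)%N ?dvdp_derivn_Xn ?subn1.
- by move=> i lt_im; rewrite -derivSn H_at1.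
rewrite int01_deriv_divXn // (H_at1 0%N) // addr0 factS natrM; ring.
Qed.

End Integral01.

Section Psi.
Context {R : realType} {n : nat}.
Hypothesis n_even : ~~ odd n.
Implicit Types p q r : {poly R}.

Local Notation k := n.+1.
Let W : {poly R} := 'X * (1 - 'X).
Let F : {poly R} := 'X^(k.+1) * (1 - 'X) ^+ k.
Let c : R := (k`!%:R)^-1.
Let psi : {poly R} := psi_poly R k.
Let kR : R := k%:R.

Let sign_n : (-1) ^+ n = 1 :> R.
Proof. by rewrite -signr_odd (negbTE n_even). Qed.

Let comp_1mX_F : F \Po (1 - 'X) = (1 - 'X) ^+ k.+1 * 'X^k.
Proof. by rewrite /F comp_polyM !rmorphXn /= comp_polyX comp_1mX_1mX. Qed.

Let F_derivn0 i : (i <= k)%N -> (F^`(i)).[0] = 0.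
Proof. by move=> le_ik; rewrite derivn_horner0 coefXnM ltnS le_ik mul0r. Qed.

Let F_derivn0_top : (F^`(k.+1)).[0] = (k.+1)`!%:R.
Proof.
rewrite derivn_horner0 coefXnM ltnn subnn -horner_coef0 horner_exp horner_1mX.
by rewrite subr0 expr1n mul1r.
Qed.

Let F_derivn1 i : (i < k)%N -> (F^`(i)).[1] = 0.
Proof.
by move=> lt_ik; rewrite derivn_horner1 comp_1mX_F coefMXn lt_ik mul0r mulr0.
Qed.

Let F_derivn1_k : (F^`(k)).[1] = - k`!%:R.
Proof.
rewrite derivn_horner1 comp_1mX_F coefMXn ltnn subnn -horner_coef0 horner_exp.
by rewrite horner_1mX subr0 expr1n mul1r exprS sign_n mulr1 mulN1r.
Qed.

Let F_derivn1_top : (F^`(k.+1)).[1] = - ((k.+1)%:R * (k.+1)`!%:R).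
Proof.
rewrite derivn_horner1 comp_1mX_F coefMXn ltnNge leqnSn /= subSn // subnn.
by rewrite coef1_1mXn !exprS sign_n; ring.
Qed.

Lemma psi_mulW : psi * W = c *: F^`(n).
Proof.
rewrite /psi /psi_poly -/F -/W -scalerAl divpK //.
by apply: dvdp_mulX1mX; [apply: F_derivn0 | apply: F_derivn1].
Qed.

Lemma size_psi : (size psi <= k.+1)%N.
Proof.
rewrite (leq_trans (size_scale_leq _ _)) // size_divp; last first.
  by rewrite -size_poly_eq0 size_mulX1mX.
rewrite size_mulX1mX leq_subLR (leq_trans (size_derivn_leq _ _)) // leq_subLR.
rewrite (leq_trans (size_polyMleq _ _)) // size_polyXn -comp_Xn_poly size_comp_1mX.
by rewrite size_polyXn; lia.
Qed.

Let kR_gt0 : 0 < kR. Proof. exact: ltr0Sn. Qed.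

Let natr_k1 : (k.+1)%:R = kR + 1 :> R. Proof. by rewrite natr1. Qed.

Let natr_k2 : (k.+2)%:R = kR + 2 :> R.
Proof. by rewrite -natr1 natr_k1 -addrA. Qed.

Let c_fact : c * k`!%:R = 1.
Proof. by rewrite mulVf // pnatr_eq0 -lt0n fact_gt0. Qed.

Let c_fact_pred : c * n`!%:R = kR^-1.
Proof.
by rewrite /c factS natrM invfM -mulrA mulVf ?mulr1 // pnatr_eq0 -lt0n fact_gt0.
Qed.

Let psi_orthogonal q : (size q <= n)%N -> int01 (q * (psi * W)) = 0.
Proof.
move=> szq; rewrite psi_mulW -scalerAr int01Z int01_mul_derivn_eq0 ?mulr0 //.
by move=> i lt_in; split; [apply: F_derivn0 | apply: F_derivn1]; lia.
Qed.

Let A := int01 ((1 - 'X) * psi).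
Let B := int01 ('X * psi).

Lemma int01_mul_psi r :
  (size r <= k.+1)%N -> int01 (r * psi) = r.[0] * A + r.[1] * B.
Proof.
move=> szr; set s := r - (r.[0] *: (1 - 'X) + r.[1] *: 'X).
have W_dvd_s : W %| s by apply: dvdp_mulX1mX; rewrite /s !hornerE; ring.
have szs : (size s <= k.+1)%N.
  apply: leq_trans (size_polyD _ _) _; rewrite size_polyN geq_max szr /=.
  apply: leq_trans (size_polyD _ _) _; rewrite geq_max.
  apply/andP; split; apply: leq_trans (size_scale_leq _ _) _.
  - by rewrite size_1mX.
  - by rewrite size_polyX.
have szq : (size (s %/ W)%R <= n)%N.
  by rewrite size_divp -?size_poly_eq0 size_mulX1mX // leq_subLR add2n.
have -> : r * psi =
    r.[0] *: ((1 - 'X) * psi) + r.[1] *: ('X * psi) + s %/ W * (psi * W).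
  by rewrite mulrCA divpK // /s -!mul_polyC; ring.
by rewrite !int01D !int01Z psi_orthogonal ?addr0.
Qed.

Let int01_1mX_mul p G : p * W = c *: G^`(n) -> 'X^k %| G ->
  (forall i, (i < n)%N -> (G^`(i)).[1] = 0) ->
  int01 ((1 - 'X) * p) = kR^-1 * int01 (G %/ 'X^k).
Proof.
move=> pW dvdG G_at1.
have pWE : p * W = (1 - 'X) * p * 'X by rewrite /W; ring.
have -> : (1 - 'X) * p = c *: (G^`(n) %/ 'X).
  by rewrite -divpZl -pW pWE mulpK ?polyX_eq0.
by rewrite int01Z int01_derivn_divX // mulrA c_fact_pred.
Qed.

Lemma int01_1mX_mul_psi : A = 1 / (kR * (kR + 1) * (kR + 2)).
Proof.
rewrite /A (int01_1mX_mul _ _ psi_mulW); last 2 first.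
- by rewrite /F dvdp_mulr // dvdp_exp2l.
- by move=> i lt_in; apply: F_derivn1; lia.
have -> : F = ((1 - 'X) ^+ k - (1 - 'X) ^+ k.+1) * 'X^k by rewrite /F !exprS; ring.
rewrite mulpK ?expf_neq0 ?polyX_eq0 // int01B !int01_1mXn natr_k1 natr_k2.
by field; rewrite !gt_eqF //; move: kR_gt0; lra.
Qed.

Lemma int01_X_mul_psi : B = 1 / (kR * (kR + 2)).
Proof.
set G := F \Po (1 - 'X).
have psi_reflect_mulW : (psi \Po (1 - 'X)) * W = c *: G^`(n).
  have W_sym : W \Po (1 - 'X) = W.
    by rewrite /W comp_polyM comp_polyX comp_1mX_1mX mulrC.
  rewrite -W_sym -comp_polyM psi_mulW comp_polyZ /G derivn_comp_1mX sign_n.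
  by rewrite scale1r.
rewrite /B -int01_comp_1mX comp_polyM comp_polyX.
rewrite (int01_1mX_mul _ _ psi_reflect_mulW); last 2 first.
- by rewrite /G comp_1mX_F dvdp_mull.
- move=> i lt_in; rewrite derivn_horner1 /G comp_1mXK /F coefXnM ifT //; last lia.
  by rewrite mul0r mulr0.
rewrite /G comp_1mX_F mulpK ?expf_neq0 ?polyX_eq0 // int01_1mXn natr_k2.
by field; rewrite !gt_eqF //; move: kR_gt0; lra.
Qed.

Let psiW_deriv : (psi * W)^`() = c *: F^`(k).
Proof. by rewrite psi_mulW derivZ -derivnS. Qed.

Let psiW_deriv2 : (psi * W)^`()^`() = c *: F^`(k.+1).
Proof. by rewrite psiW_deriv derivZ -derivnS. Qed.

Let c_fact_succ : c * (k.+1)`!%:R = kR + 1.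
Proof. by rewrite factS natrM mulrCA c_fact mulr1 natr_k1. Qed.

Lemma psi_horner0 : psi.[0] = 0.
Proof.
have [<- _] := mulX1mX_deriv_horner0 psi.
by rewrite -/W psiW_deriv hornerZ F_derivn0 ?mulr0.
Qed.

Lemma psi_horner1 : psi.[1] = 1.
Proof.
have [+ _] := mulX1mX_deriv_horner1 psi.
by rewrite -/W psiW_deriv hornerZ F_derivn1_k mulrN c_fact => /oppr_inj.
Qed.

Lemma deriv_psi_horner0 : (psi^`()).[0] = (kR + 1) / 2.
Proof.
have [_] := mulX1mX_deriv_horner0 psi.
rewrite -/W psiW_deriv2 hornerZ F_derivn0_top c_fact_succ psi_horner0; lra.
Qed.

Lemma deriv_psi_horner1 : (psi^`()).[1] = (kR ^+ 2 + 2 * kR - 1) / 2.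
Proof.
have [_] := mulX1mX_deriv_horner1 psi.
rewrite -/W psiW_deriv2 hornerZ F_derivn1_top mulrN mulrCA c_fact_succ natr_k1.
rewrite psi_horner1; lra.
Qed.

Lemma int01_psi_sqr : int01 (psi ^+ 2) = 1 / (kR * (kR + 2)).
Proof.
rewrite expr2 int01_mul_psi ?size_psi // psi_horner0 psi_horner1.
by rewrite mul0r mul1r add0r int01_X_mul_psi.
Qed.

Lemma int01_psi_mul_reflect :
  int01 (psi * (psi \Po (1 - 'X))) = 1 / (kR * (kR + 1) * (kR + 2)).
Proof.
rewrite mulrC int01_mul_psi ?size_comp_1mX ?size_psi // !horner_comp !horner_1mX.
by rewrite subr0 subrr psi_horner0 psi_horner1 mul1r mul0r addr0 int01_1mX_mul_psi.
Qed.

Lemma int01_Xn_mul_psi j : (1 <= j <= k)%N ->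
  int01 ('X^j * psi) = 1 / (kR * (kR + 2)).
Proof.
case: j => [|j] // /andP [_ le_jk].
rewrite int01_mul_psi ?size_polyXn ?ltnS // !hornerXn expr1n expr0n /=.
by rewrite mul0r mul1r add0r int01_X_mul_psi.
Qed.

Lemma int01_psi : int01 psi = 1 / (kR * (kR + 1)).
Proof.
rewrite -[psi]mul1r int01_mul_psi ?size_poly1 // -polyC1 !hornerC !mul1r.
rewrite int01_1mX_mul_psi int01_X_mul_psi.
by field; rewrite !gt_eqF //; move: kR_gt0; lra.
Qed.

Lemma int01_1mXn_mul_psi j : (1 <= j <= k)%N ->
  int01 ((1 - 'X) ^+ j * psi) = 1 / (kR * (kR + 1) * (kR + 2)).
Proof.
case: j => [|j] // /andP [_ le_jk].
rewrite int01_mul_psi; last by rewrite -comp_Xn_poly size_comp_1mX size_polyXn ltnS.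
rewrite !horner_exp !horner_1mX subr0 subrr expr1n expr0n /=.
by rewrite int01_1mX_mul_psi mulr0n; ring.
Qed.

Lemma int01_deriv_psi_mul_reflect :
  int01 (psi^`() * (psi \Po (1 - 'X))) = 1 / (kR + 1).
Proof.
rewrite mulrC int01_by_parts !hornerM !horner_comp !horner_1mX subr0 subrr.
rewrite psi_horner0 psi_horner1 mul0r mulr0 subrr sub0r deriv_comp deriv_1mX.
rewrite mulrN1 mulNr int01N opprK int01_mul_psi; last first.
  rewrite size_comp_1mX -derivn1 (leq_trans (size_derivn_leq _ _)) // leq_subLR.
  exact: leq_trans size_psi (leq_addl _ _).
rewrite !horner_comp !horner_1mX subr0 subrr deriv_psi_horner0 deriv_psi_horner1.
rewrite int01_1mX_mul_psi int01_X_mul_psi.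
by field; rewrite !gt_eqF //; move: kR_gt0; lra.
Qed.

End Psi.

Local Open Scope classical_set_scope.

Theorem lemma2p2 (R : realType) (kappa : nat) :
  let k := (2 * kappa + 1)%N in
  let psi := psi_poly R k in
  let kR : R := k%:R in
  (\int[lebesgue_measure]_(x in `[0%R, 1%R]) ((psi.[x]) ^+ 2)%:E
     = (1 / (kR * (kR + 2)))%:E)%E /\
  (\int[lebesgue_measure]_(x in `[0%R, 1%R]) (psi.[x] * psi.[1 - x])%:E
     = (1 / (kR * (kR + 1) * (kR + 2)))%:E)%E /\
  (forall j : nat, (1 <= j <= k)%N ->
    \int[lebesgue_measure]_(x in `[0%R, 1%R]) (x ^+ j * psi.[x])%:E
     = (1 / (kR * (kR + 2)))%:E)%E /\
  (\int[lebesgue_measure]_(x in `[0%R, 1%R]) (psi.[x])%:E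
     = (1 / (kR * (kR + 1)))%:E)%E /\
  (forall j : nat, (1 <= j <= k)%N ->
    \int[lebesgue_measure]_(x in `[0%R, 1%R]) ((1 - x) ^+ j * psi.[x])%:E
     = (1 / (kR * (kR + 1) * (kR + 2)))%:E)%E /\
  ((psi^`()).[0] = (kR + 1) / 2 /\
   (psi^`()).[1] = (kR ^+ 2 + 2 * kR - 1) / 2) /\
  (\int[lebesgue_measure]_(x in `[0%R, 1%R]) ((psi^`()).[x] * psi.[1 - x])%:E
     = (1 / (kR + 1))%:E)%E.
Proof.
move=> k psi kR; rewrite {}/psi {}/kR {}/k addn1.
have even : ~~ odd (2 * kappa) by rewrite oddM.
set psi := psi_poly R _.
have psi_1mx x : psi.[1 - x] = (psi \Po (1 - 'X)).[x] by rewrite horner_comp horner_1mX.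
split; [|split; [|split; [|split; [|split; [|split]]]]].
- rewrite (integral01_poly (psi ^+ 2)) => [|x /=]; last by rewrite horner_exp.
  by rewrite (int01_psi_sqr even).
- rewrite (integral01_poly (psi * (psi \Po (1 - 'X)))) => [|x /=].
    by rewrite (int01_psi_mul_reflect even).
  by rewrite hornerM psi_1mx.
- move=> j hj; rewrite (integral01_poly ('X^j * psi)) => [|x /=].
    by rewrite (int01_Xn_mul_psi even).
  by rewrite hornerM hornerXn.
- by rewrite (integral01_poly psi) // (int01_psi even).
- move=> j hj; rewrite (integral01_poly ((1 - 'X) ^+ j * psi)) => [|x /=].
    by rewrite (int01_1mXn_mul_psi even).
  by rewrite hornerM horner_exp horner_1mX.
- by rewrite deriv_psi_horner0 (deriv_psi_horner1 even).
- rewrite (integral01_poly (psi^`() * (psi \Po (1 - 'X)))) => [|x /=].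
    by rewrite (int01_deriv_psi_mul_reflect even).
  by rewrite hornerM psi_1mx.
Qed.
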